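(* Let $\theta_1,\theta_2>0$, $\theta=\theta_1+\theta_2$, $p=\theta_1/\theta$, and let \[ \mathcal{L}g(x)=x\big(g(1)-g(x)\big)+(1-x)\big(g(0)-g(x)\big)+\tfrac12(\theta_1-\theta x)g'(x). \] The eigenvalues of $\mathcal{L}$ (acting on polynomials) are $\lambda_0=0$, $\lambda_1=\theta/2$ and $\lambda_n=1+n\theta/2$ for $n\ge 2$. The corresponding right eigenvectors are monic polynomials $P_n$ with $\mathcal{L}P_n=-\lambda_nP_n$, given by $P_0(x)=1$, $P_1(x)=x-p$, and for $n\ge2$ \[ P_n(x)=(x-p)^n+c_{n1}(x-p)+c_{n0}, \] where \[ c_{n0}=-\frac{2/\theta}{n+2/\theta}\Big[p(1-p)^n+(1-p)(-p)^n\Big],\qquad c_{n1}=\frac{2/\theta}{n-1+2/\theta}\Big[(-p)^n-(1-p)^n\Big]. \]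
   Context: $\mathcal{L}$ is the generator of the two-type star-shaped $\Lambda$-Fleming–Viot process with mutation (whole-population replacement at rate 1, mutation at rate $\theta/2$ along lines with new type 1 with probability $p$). *)

From HB Require Import structures.
From mathcomp Require Import all_boot all_order all_algebra.
From mathcomp Require Import reals.
Set Implicit Arguments. Unset Strict Implicit. Unset Printing Implicit Defensive.
Import Order.TTheory GRing.Theory Num.Theory.
Local Open Scope ring_scope.

Section Gen.
Variable R : realType.

Definition Lgen (th1 th2 : R) (g : {poly R}) : {poly R} :=
  'X * (g.[1]%:P - g) + (1 - 'X) * (g.[0]%:P - g)
  + 2^-1 *: ((th1%:P - (th1 + th2) *: 'X) * g^`()).

Definition pmut (th1 th2 : R) : R := th1 / (th1 + th2).

Definition lam (th1 th2 : R) (n : nat) : R :=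
  match n with
  | 0 => 0
  | 1 => (th1 + th2) / 2
  | _ => 1 + n%:R * (th1 + th2) / 2
  end.

Definition c0 (th1 th2 : R) (n : nat) : R :=
  let th := th1 + th2 in let p := pmut th1 th2 in
  - ((2 / th) / (n%:R + 2 / th)) * (p * (1 - p) ^+ n + (1 - p) * (- p) ^+ n).

Definition c1 (th1 th2 : R) (n : nat) : R :=
  let th := th1 + th2 in let p := pmut th1 th2 in
  ((2 / th) / (n%:R - 1 + 2 / th)) * ((- p) ^+ n - (1 - p) ^+ n).

Definition Pn (th1 th2 : R) (n : nat) : {poly R} :=
  let p := pmut th1 th2 in
  match n with
  | 0 => 1
  | 1 => 'X - p%:P
  | _ => ('X - p%:P) ^+ n + c1 th1 th2 n *: ('X - p%:P) + (c0 th1 th2 n)%:P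
  end.

End Gen.

From HB Require Import structures.
From mathcomp Require Import all_boot all_order all_algebra.
From mathcomp Require Import reals.
From mathcomp Require Import ring lra.
Import Order.TTheory GRing.Theory Num.Theory.
Local Open Scope ring_scope.

(* Write y = X - p. Since th1 - th X = - th y, the drift part of L acts on y^n
   as multiplication by - n th / 2, while the jump part replaces y^n by the line
   through the points (0, (-p)^n) and (1, (1-p)^n), minus y^n itself. Hence
   L (y^n) = - (1 + n th / 2) y^n + (terms of degree <= 1), and solving for the
   two lower coefficients of P_n is a triangular linear system. Conversely L
   preserves degrees and multiplies the leading coefficient of a polynomial of
   degree d by - lam d, so these are the only eigenvalues. *)

Section MonicShift.
Variables (R : nzRingType) (c : R) (n : nat) (q : {poly R}).
Hypothesis size_q : (size q <= n)%N.

Lemma size_XsubC_expDl : size (('X - c%:P) ^+ n + q) = n.+1.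
Proof. by rewrite size_polyDl size_exp_XsubC. Qed.

Lemma monic_XsubC_expDl : ('X - c%:P) ^+ n + q \is monic.
Proof.
by rewrite monicE lead_coefDl ?size_exp_XsubC // -monicE monic_exp ?monicXsubC.
Qed.

End MonicShift.

Lemma size_affine_XsubC (R : nzRingType) (a b c : R) :
  (size (a *: ('X - c%:P) + b%:P)%R <= 2)%N.
Proof.
apply: leq_trans (size_polyD _ _) _; rewrite geq_max.
by rewrite (leq_trans (size_scale_leq _ _)) ?size_XsubC // (leq_trans (size_polyC_leq1 _)).
Qed.

Section Generator.
Variables (R : realType) (th1 th2 : R).
Local Notation L := (Lgen th1 th2).
Local Notation th := (th1 + th2).
Local Notation p := (pmut th1 th2).
Local Notation y := ('X - p%:P).

Lemma LgenD f g : L (f + g) = L f + L g.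
Proof.
rewrite /Lgen derivD !hornerD -!mul_polyC !(polyCN, polyCM, polyCB, polyCD); ring.
Qed.

Lemma LgenZ a f : L (a *: f) = a *: L f.
Proof.
rewrite /Lgen derivZ !hornerZ -!mul_polyC !(polyCN, polyCM, polyCB, polyCD); ring.
Qed.

Lemma LgenC c : L c%:P = 0.
Proof. by rewrite /Lgen derivC !hornerC !(subrr, mulr0, scaler0, addr0). Qed.

Lemma size_Pn n : size (Pn th1 th2 n) = n.+1.
Proof.
case: n => [|[|m]]; rewrite /Pn ?size_poly1 ?size_XsubC // -addrA.
by rewrite size_XsubC_expDl // (leq_trans (size_affine_XsubC _ _ _ _)).
Qed.

Lemma Pn_monic n : Pn th1 th2 n \is monic.
Proof.
case: n => [|[|m]]; rewrite /Pn ?monic1 ?monicXsubC // -addrA.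
by rewrite monic_XsubC_expDl // (leq_trans (size_affine_XsubC _ _ _ _)).
Qed.

Lemma Lgen_lead_coef g : g != 0 ->
  (L g)`_(size g).-1 = - lam th1 th2 (size g).-1 * lead_coef g.
Proof.
move=> g_neq0; rewrite lead_coefE; set d := (size g).-1.
have size_g : size g = d.+1 by rewrite prednK // size_poly_gt0.
have g_top : g`_d.+1 = 0 by rewrite nth_default // size_g.
have -> : L g = 'X * (g.[1] - g.[0])%:P + g.[0]%:P - g
                + 2^-1 *: (th1 *: g^`() - th *: ('X * g^`())).
  by rewrite /Lgen -!mul_polyC !(polyCN, polyCM, polyCB, polyCD); ring.
rewrite !(coefD, coefB, coefN, coefZ, coefC, coefXM, coef_deriv) g_top mul0rn.
case: d size_g g_top => [|[|d]] size_g _ /=.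
- rewrite [in g.[0]](size1_polyC (eq_leq size_g)) hornerC /lam; ring.
- rewrite (horner_coef g 1) (horner_coef g 0) size_g !big_ord_recl !big_ord0.
  rewrite /lam /bump /= !expr0 !expr1; ring.
- rewrite /lam -[_ *+ d.+2]mulr_natr; ring.
Qed.

Lemma Lgen_eigenvalue g mu : g != 0 -> L g = - mu *: g ->
  mu = lam th1 th2 (size g).-1.
Proof.
move=> g_neq0 Lg; have := Lgen_lead_coef _ g_neq0.
rewrite Lg coefZ -lead_coefE => lead_eq.
by apply/oppr_inj/(mulIf _ lead_eq); rewrite lead_coef_eq0.
Qed.

Hypothesis th_gt0 : 0 < th.

Let th_neq0 : th != 0. Proof. by rewrite gt_eqF. Qed.

Lemma drift_XsubC : th1%:P - th *: 'X = - th *: y.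
Proof.
have thp : th * p = th1 by rewrite /pmut mulrCA mulfV // mulr1.
by rewrite -{1}thp -!mul_polyC polyCM polyCN; ring.
Qed.

(* [central_moment n] is the n-th central moment of a Bernoulli(p) variable. *)
Local Notation central_moment n := (p * (1 - p) ^+ n + (1 - p) * (- p) ^+ n).
Local Notation increment n := ((1 - p) ^+ n - (- p) ^+ n).

Lemma Lgen_XsubC_exp n :
  L (y ^+ n) = (central_moment n)%:P + increment n *: y
               - (1 + n%:R * th / 2) *: y ^+ n.
Proof.
have y_deriv : y * (y ^+ n)^`() = n%:R *: y ^+ n.
  rewrite deriv_exp derivXsubC mul1r scaler_nat.
  by case: n => [|m]; rewrite ?mulr0n ?mulr0 // mulrnAr -exprS.
rewrite /Lgen drift_XsubC -scalerAl y_deriv !hornerE.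
rewrite -!mul_polyC !(polyCN, polyCM, polyCB, polyCD, polyC_exp); ring.
Qed.

Lemma Lgen_XsubC : L y = - (th / 2) *: y.
Proof.
rewrite -[y]expr1 Lgen_XsubC_exp !expr1 -!mul_polyC.
rewrite !(polyCN, polyCM, polyCB, polyCD); ring.
Qed.

Lemma c1_eq n : c1 th1 th2 n.+1 * (1 + n%:R * th / 2) = - increment n.+1.
Proof.
have two_th_gt0 : 0 < 2 / th by rewrite divr_gt0.
have n_ge0 : 0 <= n%:R :> R by [].
have nth_ge0 : 0 <= n%:R * th by rewrite mulr_ge0 // ltW.
rewrite /c1 -addn1 natrD.
have den_neq0 : n%:R + 1 - 1 + 2 / th != 0 :> R by rewrite gt_eqF //; lra.
field; rewrite ?th_neq0 ?den_neq0 //=.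
by rewrite gt_eqF //; nra.
Qed.

Lemma c0_eq n : c0 th1 th2 n * (1 + n%:R * th / 2) = - central_moment n.
Proof.
have two_th_gt0 : 0 < 2 / th by rewrite divr_gt0.
have n_ge0 : 0 <= n%:R :> R by [].
have nth_ge0 : 0 <= n%:R * th by rewrite mulr_ge0 // ltW.
have den_neq0 : n%:R + 2 / th != 0 :> R by rewrite gt_eqF //; lra.
rewrite /c0; field; rewrite ?th_neq0 ?den_neq0 //=.
by rewrite gt_eqF //; nra.
Qed.

Lemma Lgen_Pn n : L (Pn th1 th2 n) = - lam th1 th2 n *: Pn th1 th2 n.
Proof.
case: n => [|[|m]]; rewrite /Pn /lam.
- by rewrite -polyC1 LgenC oppr0 scale0r.
- by rewrite Lgen_XsubC.
rewrite !LgenD LgenZ LgenC Lgen_XsubC Lgen_XsubC_exp addr0.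
have hc1 := c1_eq m.+1; have hc0 := c0_eq m.+2.
set a1 := c1 th1 th2 m.+2 in hc1 *; set a0 := c0 th1 th2 m.+2 in hc0 *.
rewrite -(opprK (increment _)) -(opprK (central_moment _)) -hc1 -hc0.
rewrite [m.+2%:R]mulrS; move: (m.+1%:R) => k.
rewrite -!mul_polyC !(polyCN, polyCM, polyCB, polyCD, polyC1, polyC_exp); ring.
Qed.

End Generator.

Theorem theorem2 (R : realType) (th1 th2 : R) :
  0 < th1 -> 0 < th2 ->
  (* the eigenvalues of L on polynomials are exactly the lambda_n *)
  (forall mu : R,
      (exists g : {poly R}, g != 0 /\ Lgen th1 th2 g = - mu *: g)
      <-> (exists n : nat, mu = lam th1 th2 n)) /\
  (* P_n is a monic polynomial of degree n with L P_n = - lambda_n P_n *)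
  (forall n : nat,
      Pn th1 th2 n \is monic /\ size (Pn th1 th2 n) = n.+1 /\
      Lgen th1 th2 (Pn th1 th2 n) = - lam th1 th2 n *: Pn th1 th2 n).
Proof.
move=> th1_gt0 th2_gt0; have th_gt0 : 0 < th1 + th2 by rewrite addr_gt0.
have eigen_Pn n := @Lgen_Pn R th1 th2 th_gt0 n.
split=> [mu|n]; last by rewrite Pn_monic size_Pn eigen_Pn.
split=> [[g [g_neq0 Lg]] | [n ->]].
- by exists (size g).-1; exact: Lgen_eigenvalue.
- by exists (Pn th1 th2 n); rewrite monic_neq0 ?Pn_monic ?eigen_Pn.
Qed.
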